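(* Let $G_1$ and $G_2$ be two vertex-disjoint simple connected graphs with $|V(G_1)|=n_1$, $|V(G_2)|=n_2$, $|E(G_1)|=m_1$, $|E(G_2)|=m_2$. Then the vertex T-join $G_1\dot{\vee}_T G_2$ satisfies \[ F(G_1\dot{\vee}_T G_2)=8F(G_1)+F(G_2)+12n_2M_1(G_1)+3n_1M_1(G_2)+M_4(G_1)+3\,ReZM(G_1)+12m_1n_2^{2}+6m_2n_1^{2}+n_1n_2(n_1^2+n_2^2). \]
   Context: For a simple graph $G$ and $v\in V(G)$, $d_G(v)$ is the degree of $v$. Define $M_1(G)=\sum_{v\in V(G)}d_G(v)^2$, $F(G)=\sum_{v\in V(G)}d_G(v)^3$, $M_4(G)=\sum_{v\in V(G)}d_G(v)^4$, and $ReZM(G)=\sum_{uv\in E(G)}d_G(u)d_G(v)\,[d_G(u)+d_G(v)]$. The total graph $T(G)$ is obtained from $G$ (keeping all edges of $G$) by inserting a new vertex for each edge of $G$, joining each new vertex to the two end vertices of its edge, and joining by an edge each pair of new vertices corresponding to adjacent edges of $G$ (edges sharing an end vertex); let $I(G)$ denote the set of these new vertices, so $V(T(G))=V(G)\cup I(G)$. The vertex T-join $G_1\dot{\vee}_T G_2$ is the graph obtained from $T(G_1)$ and $G_2$ (taken vertex-disjoint) by joining each vertex of $V(G_1)$ to every vertex of $G_2$ by an edge. *)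

From mathcomp Require Import all_boot.
Set Implicit Arguments. Unset Strict Implicit. Unset Printing Implicit Defensive.

Section Graphs.
Variable V : finType.
Implicit Types (r : rel V).

Definition simple_graph r := symmetric r /\ irreflexive r.

Definition connected_graph r := 0 < #|V| /\ forall x y : V, connect r x y.

Definition deg r (v : V) : nat := #|[set u | r v u]|.

Definition edges r : {set {set V}} :=
  [set E : {set V} | [exists u, exists v, r u v && (E == [set u; v])]].

Definition M1 r := \sum_(v : V) deg r v ^ 2.
Definition Fidx r := \sum_(v : V) deg r v ^ 3.
Definition M4 r := \sum_(v : V) deg r v ^ 4.
Definition ReZM r :=
  \sum_(E in edges r) ((\prod_(x in E) deg r x) * (\sum_(x in E) deg r x)).
End Graphs.

(* the type of edges of G, i.e. of new vertices I(G) in the total graph *)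
Definition edge_type (V : finType) (r : rel V) := {E : {set V} | E \in edges r}.

Definition total_rel (V : finType) (r : rel V) : rel (V + edge_type r) :=
  fun a b =>
    match a, b with
    | inl u, inl v => r u v
    | inl u, inr E => u \in val E
    | inr E, inl u => u \in val E
    | inr E, inr F => (E != F) && (val E :&: val F != set0)
    end.

Definition vertex_T_join (V1 V2 : finType) (r1 : rel V1) (r2 : rel V2)
  : rel ((V1 + edge_type r1) + V2) :=
  fun a b =>
    match a, b with
    | inl x, inl y => @total_rel _ r1 x y
    | inl (inl _), inr _ => true
    | inr _, inl (inl _) => true
    | inr u, inr v => r2 u v
    | _, _ => false
    end.

Arguments total_rel {V} r.
Arguments vertex_T_join {V1 V2} r1 r2.
Arguments edge_type {V} r.

(* In the vertex T-join an old vertex v of G1 has degree 2 d(v) + n2, the new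
   vertex of an edge uv of G1 has degree d(u) + d(v) (its two endpoints plus the
   d(u) + d(v) - 2 edges adjacent to uv), and a vertex w of G2 has degree
   d(w) + n1.  Cubing and summing gives the formula: the handshake lemma turns
   sums of degrees into 2m, and summing
   (d(u) + d(v))^3 = d(u)^3 + d(v)^3 + 3 d(u) d(v) (d(u) + d(v)) over the edges
   gives M4 + 3 ReZM, because each x occurs in d(x) edges. *)

From mathcomp Require Import all_boot ring.
Set Implicit Arguments. Unset Strict Implicit. Unset Printing Implicit Defensive.

Section Counting.
Variable T : finType.

Lemma sum_mem_card (A : {pred T}) : \sum_x (x \in A : nat) = #|A|.
Proof. by rewrite -sum1_card [RHS]big_mkcond. Qed.

Lemma sum_in_bool_card (A : {pred T}) (P : pred T) :
  \sum_(x in A) (P x : nat) = #|[set x in A | P x]|.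
Proof. by rewrite -sum1dep_card [RHS]big_mkcondr. Qed.

Lemma setI2_neq0 (a b : T) (F : {set T}) :
  ([set a; b] :&: F != set0) = (a \in F) || (b \in F).
Proof.
apply/set0Pn/orP => [[x]|[aF|bF]].
- by rewrite !inE => /andP[/orP[/eqP->|/eqP->] xF]; [left|right].
- by exists a; rewrite !inE eqxx aF.
- by exists b; rewrite !inE eqxx bF orbT.
Qed.

Lemma cube_sum_card2 (d : T -> nat) (E : {set T}) : #|E| = 2 ->
  (\sum_(x in E) d x) ^ 3
  = \sum_(x in E) d x ^ 3 + 3 * ((\prod_(x in E) d x) * \sum_(x in E) d x).
Proof.
move/eqP/cards2P => [a [b [ab ->]]].
by rewrite !big_setU1 ?inE //= !big_set1; ring.
Qed.

End Counting.

Section SimpleGraph.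
Variables (T : finType) (r : rel T).

Lemma deg_sum v : deg r v = \sum_u (r v u : nat).
Proof. by rewrite sum_mem_card /deg cardsE. Qed.

Lemma sum_edge_type (f : {set T} -> nat) :
  \sum_(E : edge_type r) f (val E) = \sum_(F in edges r) f F.
Proof. exact: (esym (big_sub _ _)). Qed.

Hypothesis sg : simple_graph r.

Lemma edgesP E :
  E \in edges r -> exists u v, [/\ r u v, u != v & E = [set u; v]].
Proof.
case: sg => _ irr; rewrite inE => /existsP[u /existsP[v /andP[ruv /eqP->]]].
by exists u, v; split=> //; apply: contraTneq ruv => <-; rewrite irr.
Qed.

Lemma card_edge E : E \in edges r -> #|E| = 2.
Proof. by case/edgesP=> u [v [_ uv ->]]; rewrite cards2 uv. Qed.

Lemma sum_edges_mem x : \sum_(E in edges r) (x \in E : nat) = deg r x.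
Proof.
case: (sg) => sym irr.
have edges_at : [set E in edges r | x \in E] = [set [set x; u] | u in [set u | r x u]].
  apply/setP => E; rewrite inE; apply/andP/imsetP => [[/edgesP[u [v [uv _ ->]]]]|[u]].
    rewrite !inE => /orP[]/eqP->; first by exists v; rewrite ?inE.
    by exists u; rewrite ?inE 1?sym // setUC.
  rewrite inE => xu ->; split; last by rewrite !inE eqxx.
  by rewrite inE; apply/existsP; exists x; apply/existsP; exists u; rewrite xu eqxx.
rewrite sum_in_bool_card edges_at card_in_imset // => u w; rewrite !inE => _ xw.
move/setP/(_ w); rewrite !inE eqxx orbT => /orP[/eqP wx|/eqP //].
by rewrite wx irr in xw.
Qed.

Lemma sum_edges_sum (f : T -> nat) :
  \sum_(E in edges r) \sum_(x in E) f x = \sum_x f x * deg r x.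
Proof.
under eq_bigr do rewrite big_mkcond.
rewrite exchange_big; apply: eq_bigr => x _.
rewrite -sum_edges_mem big_distrr /=; apply: eq_bigr => E _.
by case: (x \in E); rewrite ?muln1 ?muln0.
Qed.

Lemma handshake : \sum_x deg r x = 2 * #|edges r|.
Proof.
transitivity (\sum_x 1 * deg r x); first by apply: eq_bigr => x _; rewrite mul1n.
rewrite -(sum_edges_sum (fun=> 1)) mulnC -sum_nat_const.
by apply: eq_bigr => E Er; rewrite sum1_card card_edge.
Qed.

Lemma sum_adjacent_edges E : E \in edges r ->
  \sum_(F in edges r) ((E != F) && (E :&: F != set0) : nat) + 2
  = \sum_(x in E) deg r x.
Proof.
move=> Er; have [a [b [_ ab defE]]] := edgesP Er.
have incidence F : F \in edges r ->
    (a \in F) + (b \in F) = ((E != F) && (E :&: F != set0)) + (F == E) * 2.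
  move=> Fr; case: (eqVneq F E) => [->|FE]; first by rewrite defE !inE !eqxx orbT.
  rewrite defE setI2_neq0 addn0 /=.
  case aF: (a \in F); case bF: (b \in F) => //=.
  case/eqP: FE; apply/eqP; rewrite defE eq_sym eqEcard (card_edge Fr) cards2 ab andbT.
  by apply/subsetP => x; rewrite !inE => /orP[]/eqP->.
rewrite [in RHS]defE big_setU1 ?inE //= big_set1 -!sum_edges_mem -big_split /=.
rewrite (eq_bigr _ incidence) big_split /=; congr (_ + _).
by rewrite (bigD1 E) //= eqxx big1 // => F /andP[_ /negbTE->].
Qed.
End SimpleGraph.

Section VertexTJoin.
Variables (V1 V2 : finType) (r1 : rel V1) (r2 : rel V2).
Local Notation J := (vertex_T_join r1 r2).

Hypotheses (sg1 : simple_graph r1) (sg2 : simple_graph r2).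

Lemma deg_join_vertex1 v : deg J (inl (inl v)) = 2 * deg r1 v + #|V2|.
Proof.
rewrite deg_sum !big_sumType /= (sum_edge_type _ (fun F : {set V1} => (v \in F) : nat)).
by rewrite sum_edges_mem // -deg_sum sum_nat_const muln1 addnn -mul2n.
Qed.

Lemma deg_join_edge1 (E : edge_type r1) :
  deg J (inl (inr E)) = \sum_(x in val E) deg r1 x.
Proof.
rewrite deg_sum !big_sumType /= sum_mem_card big1_eq addn0 (card_edge sg1 (valP E)).
under eq_bigr do rewrite -val_eqE.
rewrite (sum_edge_type _ (fun F : {set V1} => (val E != F) && (val E :&: F != set0) : nat)).
by rewrite addnC (sum_adjacent_edges sg1 (valP E)).
Qed.

Lemma sum_cube_deg_join_vertex1 :
  \sum_v deg J (inl (inl v)) ^ 3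
  = 8 * Fidx r1 + 12 * #|V2| * M1 r1 + 12 * #|edges r1| * #|V2| ^ 2 + #|V1| * #|V2| ^ 3.
Proof.
have -> : 12 * #|edges r1| * #|V2| ^ 2 = 6 * #|V2| ^ 2 * (2 * #|edges r1|) by ring.
rewrite -(handshake sg1) /Fidx /M1 !big_distrr /= -sum_nat_const -!big_split /=.
by apply: eq_bigr => v _; rewrite deg_join_vertex1; ring.
Qed.

Lemma sum_cube_deg_join_edges :
  \sum_(E : edge_type r1) deg J (inl (inr E)) ^ 3 = M4 r1 + 3 * ReZM r1.
Proof.
under eq_bigr do rewrite deg_join_edge1.
rewrite (sum_edge_type _ (fun F : {set V1} => (\sum_(x in F) deg r1 x) ^ 3)).
under eq_bigr => F Fr do rewrite (cube_sum_card2 _ (card_edge sg1 Fr)).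
rewrite big_split /= -big_distrr /= sum_edges_sum // /M4 /ReZM; congr (_ + _).
by apply: eq_bigr => v _; rewrite -expnSr.
Qed.

Lemma deg_join_vertex2 w : deg J (inr w) = deg r2 w + #|V1|.
Proof.
by rewrite deg_sum !big_sumType /= big1_eq addn0 sum_nat_const muln1 -deg_sum addnC.
Qed.

Lemma sum_cube_deg_join_vertex2 :
  \sum_w deg J (inr w) ^ 3
  = Fidx r2 + 3 * #|V1| * M1 r2 + 6 * #|edges r2| * #|V1| ^ 2 + #|V2| * #|V1| ^ 3.
Proof.
have -> : 6 * #|edges r2| * #|V1| ^ 2 = 3 * #|V1| ^ 2 * (2 * #|edges r2|) by ring.
rewrite -(handshake sg2) /Fidx /M1 !big_distrr /= -sum_nat_const -!big_split /=.
by apply: eq_bigr => w _; rewrite deg_join_vertex2; ring.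
Qed.

End VertexTJoin.

Theorem theorem7 (V1 V2 : finType) (r1 : rel V1) (r2 : rel V2) :
  simple_graph r1 -> simple_graph r2 ->
  connected_graph r1 -> connected_graph r2 ->
  let n1 := #|V1| in let n2 := #|V2| in
  let m1 := #|edges r1| in let m2 := #|edges r2| in
  Fidx (vertex_T_join r1 r2) =
    8 * Fidx r1 + Fidx r2 + 12 * n2 * M1 r1 + 3 * n1 * M1 r2 + M4 r1
    + 3 * ReZM r1 + 12 * m1 * n2 ^ 2 + 6 * m2 * n1 ^ 2
    + n1 * n2 * (n1 ^ 2 + n2 ^ 2).
Proof.
move=> sg1 sg2 _ _ n1 n2 m1 m2.
rewrite {1}/Fidx !big_sumType /= sum_cube_deg_join_vertex1 //.
rewrite sum_cube_deg_join_edges // sum_cube_deg_join_vertex2 //.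
ring.
Qed.
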